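(* Let $n\ge1$, $d=2^n$, and let $|\psi\rangle$ be an $n$-qubit pure state. Then $|St(|\psi\rangle)|\le d^2/\mathrm{card}(|\psi\rangle)$; equivalently $M_0(|\psi\rangle)\le \nu(|\psi\rangle)$. Consequently $M_\alpha(|\psi\rangle)\le\nu(|\psi\rangle)$ for every $\alpha\ge0$.
   Context: Logarithms are base 2. $\mathcal{P}_n$ is the set of $4^n$ $n$-qubit Pauli strings $\sigma_1\otimes\cdots\otimes\sigma_n$, $\sigma_i\in\{I,X,Y,Z\}$ (no phases). $\Xi_P(|\psi\rangle)=d^{-1}\langle\psi|P|\psi\rangle^2$. The stabilizer $\alpha$-Rényi entropy is $M_\alpha(|\psi\rangle)=\frac{1}{1-\alpha}\log\sum_{P\in\mathcal{P}_n}\Xi_P^\alpha-\log d$ for $\alpha\ne1$ (for $\alpha=0$ summing only over $P$ with $\Xi_P\neq0$), and $M_1=-\sum_P\Xi_P\log\Xi_P-\log d$. $\mathrm{card}(|\psi\rangle)=|\{P\in\mathcal{P}_n:\langle\psi|P|\psi\rangle\ne0\}|$, so $M_0(|\psi\rangle)=\log(\mathrm{card}(|\psi\rangle)/d)$. $St(|\psi\rangle)=\{P\in\mathcal{P}_n: P|\psi\rangle=\pm|\psi\rangle\}$, and the stabilizer nullity is $\nu(|\psi\rangle)=n-\log|St(|\psi\rangle)|$. *)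

From HB Require Import structures.
From mathcomp Require Import all_boot all_order all_algebra.
From mathcomp Require Import reals exp.
From mathcomp Require Import complex.
Set Implicit Arguments. Unset Strict Implicit. Unset Printing Implicit Defensive.
Import Order.TTheory GRing.Theory Num.Theory.
Local Open Scope ring_scope.

Section Pauli.
Variable R : realType.
Local Notation C := R[i].

Definition log2 (x : R) : R := ln x / ln 2.

(* single-qubit Pauli matrices: index 0 = I, 1 = X, 2 = Y, 3 = Z;
   entries sigma a r c = (row r, column c) *)
Definition sigma (a : 'I_4) (r c : 'I_2) : C :=
  match nat_of_ord a, nat_of_ord r, nat_of_ord c with
  | 0, 0, 0 => 1 | 0, 1, 1 => 1
  | 1, 0, 1 => 1 | 1, 1, 0 => 1
  | 2, 0, 1 => - 'i%C | 2, 1, 0 => 'i%C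
  | 3, 0, 0 => 1 | 3, 1, 1 => -1
  | _, _, _ => 0
  end.

Definition qbit n (i : 'I_(2 ^ n)) (k : 'I_n) : 'I_2 := inord (odd (i %/ 2 ^ k)).

(* n-qubit Pauli strings (no phases), labelled by f : 'I_n -> {I,X,Y,Z};
   the matrix is the tensor product sigma_{f 0} (x) ... (x) sigma_{f (n-1)} *)
Definition pauli_string n := {ffun 'I_n -> 'I_4}.

Definition pauli_mx n (P : pauli_string n) : 'M[C]_(2 ^ n) :=
  \matrix_(i, j) \prod_(k < n) sigma (P k) (qbit i k) (qbit j k).

Definition is_pure_state n (psi : 'cV[C]_(2 ^ n)) : Prop :=
  \sum_(i < 2 ^ n) (psi i 0)^*%C * psi i 0 = 1.

Definition expval n (P : pauli_string n) (psi : 'cV[C]_(2 ^ n)) : C :=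
  \sum_(i < 2 ^ n) \sum_(j < 2 ^ n) (psi i 0)^*%C * pauli_mx P i j * psi j 0.

Definition dimR n : R := (2 ^ n)%:R.

(* Xi_P(psi) = d^-1 <psi|P|psi>^2  (the expectation value is real, so we
   take its real part) *)
Definition Xi n (P : pauli_string n) (psi : 'cV[C]_(2 ^ n)) : R :=
  (dimR n)^-1 * (complex.Re (expval P psi)) ^+ 2.

Definition St n (psi : 'cV[C]_(2 ^ n)) : {set pauli_string n} :=
  [set P | (pauli_mx P *m psi == psi) || (pauli_mx P *m psi == - psi)].

Definition pcard n (psi : 'cV[C]_(2 ^ n)) : nat :=
  #|[set P : pauli_string n | expval P psi != 0]|.

Definition nullity n (psi : 'cV[C]_(2 ^ n)) : R :=
  n%:R - log2 (#|St psi|)%:R.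

(* stabilizer alpha-Renyi entropy; for alpha <> 1 the sum runs over the P
   with Xi_P <> 0 (this is the stated convention for alpha = 0, and does
   not change the sum for alpha > 0 since 0 `^ alpha = 0); for alpha = 1
   the terms with Xi_P = 0 are 0 by the convention 0 log 0 = 0. *)
Definition Malpha n (alpha : R) (psi : 'cV[C]_(2 ^ n)) : R :=
  if alpha == 1 then
    - (\sum_(P : pauli_string n | Xi P psi != 0) Xi P psi * log2 (Xi P psi))
    - log2 (dimR n)
  else
    (1 - alpha)^-1 * log2 (\sum_(P : pauli_string n | Xi P psi != 0)
                              powR (Xi P psi) alpha)
    - log2 (dimR n).

End Pauli.

(* The Pauli strings have real expectation values on psi and, by the
   completeness relation sum_P P_ij (P_kl)^* = 2^n [i = k] [j = l], they satisfy
   sum_P <P>^2 = 2^n: the Xi_P form a probability distribution whose support has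
   card(psi) elements.  Every Renyi entropy of a distribution is at most the log
   of the size of its support, whence M_alpha <= M_0.
   Modulo phases St(psi) is a group, and each of its elements commutes with every
   P such that <P> != 0.  The commutation signs S, Q |-> +-1 are characters, so
   orthogonality gives |St(psi)| * |C| = 4^n for the commutant C of St(psi).
   Hence |St(psi)| * card(psi) <= 4^n = d^2, which is M_0 <= nu. *)

From HB Require Import structures.
From mathcomp Require Import all_boot all_order all_algebra.
From mathcomp Require Import reals exp.
From mathcomp Require Import complex.
From mathcomp Require Import ring lra.
Import Order.TTheory GRing.Theory Num.Theory.
Local Open Scope ring_scope.
Set Implicit Arguments. Unset Strict Implicit. Unset Printing Implicit Defensive.

Ltac case_label a := case: a => [[|[|[|[|?]]]] ?] //.
Ltac case_bit r := case: r => [[|[|?]] ?] //.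

(* In binary the labels read X = 01, Y = 10, Z = 11, so that sigma a * sigma b
   is, up to a phase, the Pauli matrix labelled by the bitwise xor of a and b. *)
Lemma label_lxor_lt (a b : 'I_4) : (Nat.lxor a b < 4)%N.
Proof. by case_label a; case_label b. Qed.

Definition label_mul (a b : 'I_4) : 'I_4 := Ordinal (label_lxor_lt a b).

Definition label_anticomm (a b : 'I_4) : bool := [&& a != ord0, b != ord0 & a != b].

Lemma label_mulC (a b : 'I_4) : label_mul a b = label_mul b a.
Proof. by apply: val_inj; case_label a; case_label b. Qed.

Lemma label_mulK (a : 'I_4) : involutive (label_mul a).
Proof. by move=> b; apply: val_inj; case_label a; case_label b. Qed.

Lemma label_anticommC (a b : 'I_4) : label_anticomm a b = label_anticomm b a.
Proof. by case_label a; case_label b. Qed.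

Lemma label_anticomm_mull (a a' b : 'I_4) :
  label_anticomm (label_mul a a') b = label_anticomm a b (+) label_anticomm a' b.
Proof. by case_label a; case_label a'; case_label b. Qed.

Section SingleQubit.
Variable R : realType.
Local Notation C := R[i].
Local Notation sigma := (sigma R).

Definition sigma_phase (a b : 'I_4) : C :=
  match nat_of_ord a, nat_of_ord b with
  | 1, 2 | 2, 3 | 3, 1 => 'i%C
  | 2, 1 | 3, 2 | 1, 3 => - 'i%C
  | _, _ => 1
  end.

Lemma sigma_mul (a b : 'I_4) (r c : 'I_2) :
  \sum_(m < 2) sigma a r m * sigma b m c = sigma_phase a b * sigma (label_mul a b) r c.
Proof.
rewrite !big_ord_recl big_ord0 /=.
have ii : 'i%C * 'i%C = -1 :> C by rewrite -expr2 sqr_i.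
by case_label a; case_label b; case_bit r; case_bit c;
  rewrite /sigma /sigma_phase /= ?mulrN ?mulNr ?ii; ring.
Qed.

Lemma sigma_conj (a : 'I_4) (r c : 'I_2) : (sigma a r c)^*%C = sigma a c r.
Proof.
by case_label a; case_bit r; case_bit c;
  apply/eqP; rewrite /sigma /= eq_complex /= ?oppr0 ?opprK !eqxx.
Qed.

Lemma sigma_id (r c : 'I_2) : sigma ord0 r c = (r == c)%:R.
Proof. by case_bit r; case_bit c. Qed.

Lemma sigma_completeness (r c r' c' : 'I_2) :
  \sum_(a < 4) sigma a r c * sigma a c' r' = ((r == r') && (c == c'))%:R *+ 2.
Proof.
have ii : 'i%C * 'i%C = -1 :> C by rewrite -expr2 sqr_i.
rewrite !big_ord_recl big_ord0 /=.
by case_bit r; case_bit c; case_bit r'; case_bit c';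
  rewrite /sigma /= ?mulrN ?mulNr ?ii; ring.
Qed.

Lemma sigma_phase_comm (a b : 'I_4) :
  sigma_phase a b = (-1) ^+ label_anticomm a b * sigma_phase b a.
Proof. by case_label a; case_label b; rewrite /sigma_phase /=; ring. Qed.

Lemma sigma_phase_sqr (a b : 'I_4) : sigma_phase a b ^+ 2 = (-1) ^+ label_anticomm a b.
Proof. by case_label a; case_label b; rewrite /sigma_phase /= ?sqrrN ?sqr_i ?expr1n. Qed.

Lemma sum_sign_label_anticomm (a : 'I_4) :
  \sum_(b < 4) (-1) ^+ label_anticomm a b = (a == ord0)%:R *+ 4 :> C.
Proof. by rewrite !big_ord_recl big_ord0; case_label a; rewrite /label_anticomm /=; ring. Qed.

End SingleQubit.

Lemma eq_bits_nat n i j : (i < 2 ^ n)%N -> (j < 2 ^ n)%N ->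
  (forall k, (k < n)%N -> odd (i %/ 2 ^ k) = odd (j %/ 2 ^ k)) -> i = j.
Proof.
elim: n i j => [|n IHn] i j; first by rewrite expn0 !ltnS !leqn0 => /eqP-> /eqP->.
rewrite expnS => lt_i lt_j eq_bits.
have eq_half : i./2 = j./2.
  apply: IHn; rewrite -?divn2 ?ltn_divLR // 1?mulnC //.
  by move=> k lt_k; rewrite -!divnMA -expnS; apply: eq_bits.
have := eq_bits 0%N isT; rewrite !divn1 => eq_odd.
by rewrite -(odd_double_half i) -(odd_double_half j) eq_odd eq_half.
Qed.

Definition qbits n (i : 'I_(2 ^ n)) : {ffun 'I_n -> 'I_2} := [ffun k => qbit i k].

Lemma qbitE n (i : 'I_(2 ^ n)) k : qbit i k = odd (i %/ 2 ^ k) :> nat.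
Proof. by rewrite /qbit inordK // ltnS leq_b1. Qed.

Lemma qbits_bij n : bijective (@qbits n).
Proof.
apply: inj_card_bij; last by rewrite card_ffun !card_ord.
move=> i j /ffunP eq_ij; apply/val_inj/(eq_bits_nat (ltn_ord i) (ltn_ord j)) => k lt_k.
have := eq_ij (Ordinal lt_k); rewrite !ffunE => /(congr1 val).
by rewrite /= !qbitE; case: odd; case: odd.
Qed.

Lemma prod_eq_ffun (R : comPzSemiRingType) (I : finType) (J : eqType) (f g : {ffun I -> J}) :
  \prod_(i : I) (f i == g i)%:R = (f == g)%:R :> R.
Proof.
have [<-|/eqP neq_fg] := eqVneq f g; first by rewrite big1 // => i _; rewrite eqxx.
have [i neq_i] : exists i, f i != g i.
  apply/existsP; apply: contra_notT neq_fg => /existsPn same.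
  by apply/ffunP => i; apply/eqP/negPn.
by rewrite (bigD1 i) //= (negbTE neq_i) mul0r.
Qed.

Section QubitSums.
Variables (R : comNzRingType) (n : nat).

Lemma sum_prod_qbit (g : 'I_n -> 'I_2 -> R) :
  \sum_(j < 2 ^ n) \prod_(k < n) g k (qbit j k) = \prod_(k < n) \sum_(b < 2) g k b.
Proof.
rewrite bigA_distr_bigA (reindex _ (onW_bij _ (qbits_bij n))) /=.
by apply: eq_bigr => j _; apply: eq_bigr => k _; rewrite ffunE.
Qed.

Lemma prod_qbit_eq (i j : 'I_(2 ^ n)) :
  \prod_(k < n) (qbit i k == qbit j k)%:R = (i == j)%:R :> R.
Proof.
rewrite -(inj_eq (bij_inj (qbits_bij n))) -prod_eq_ffun.
by apply: eq_bigr => k _; rewrite !ffunE.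
Qed.

End QubitSums.

Section PauliStrings.
Variables (R : realType) (n : nat).
Local Notation C := R[i].
Local Notation PS := (pauli_string n).
Local Notation pm := (@pauli_mx R n).

Definition pauli_id : PS := [ffun=> ord0].
Definition pauli_mul (P Q : PS) : PS := [ffun k => label_mul (P k) (Q k)].
Definition pauli_phase (P Q : PS) : C := \prod_(k < n) sigma_phase R (P k) (Q k).
Definition pauli_sign (P Q : PS) : C := \prod_(k < n) (-1) ^+ label_anticomm (P k) (Q k).

Lemma pauli_mulC (P Q : PS) : pauli_mul P Q = pauli_mul Q P.
Proof. by apply/ffunP => k; rewrite !ffunE label_mulC. Qed.

Lemma pauli_mulK (P : PS) : involutive (pauli_mul P).
Proof. by move=> Q; apply/ffunP => k; rewrite !ffunE label_mulK. Qed.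

Lemma pauli_mx_mul (P Q : PS) : pm P *m pm Q = pauli_phase P Q *: pm (pauli_mul P Q).
Proof.
apply/matrixP => i j; rewrite !mxE.
under eq_bigr do rewrite !mxE -big_split /=.
rewrite (sum_prod_qbit (fun k b => sigma R (P k) (qbit i k) b * sigma R (Q k) b (qbit j k))).
by rewrite -big_split; apply: eq_bigr => k _; rewrite sigma_mul ffunE.
Qed.

Lemma pauli_mx_conj (P : PS) i j : (pm P i j)^*%C = pm P j i.
Proof. by rewrite !mxE rmorph_prod; apply: eq_bigr => k _; apply: sigma_conj. Qed.

Lemma pauli_mx_id : pm pauli_id = 1%:M.
Proof.
apply/matrixP => i j; rewrite !mxE -prod_qbit_eq.
by apply: eq_bigr => k _; rewrite ffunE sigma_id.
Qed.

Lemma pauli_signC (P Q : PS) : pauli_sign P Q = pauli_sign Q P.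
Proof. by apply: eq_bigr => k _; rewrite label_anticommC. Qed.

Lemma pauli_sign_mull (P P' Q : PS) :
  pauli_sign (pauli_mul P P') Q = pauli_sign P Q * pauli_sign P' Q.
Proof.
rewrite -big_split; apply: eq_bigr => k _.
by rewrite ffunE label_anticomm_mull signr_addb.
Qed.

Lemma pauli_sign_sqr (P Q : PS) : pauli_sign P Q ^+ 2 = 1.
Proof. by rewrite -prodrXl big1 // => k _; rewrite sqrr_sign. Qed.

Lemma pauli_phase_sqr (P Q : PS) : pauli_phase P Q ^+ 2 = pauli_sign P Q.
Proof. by rewrite -prodrXl; apply: eq_bigr => k _; rewrite sigma_phase_sqr. Qed.

Lemma pauli_mx_comm (P Q : PS) : pm P *m pm Q = pauli_sign P Q *: (pm Q *m pm P).
Proof.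
rewrite !pauli_mx_mul scalerA pauli_mulC -big_split.
by congr (_ *: _); apply: eq_bigr => k _; rewrite sigma_phase_comm.
Qed.

Lemma sum_pauli_sign (P : PS) : \sum_(Q : PS) pauli_sign P Q = (P == pauli_id)%:R *+ 4 ^ n.
Proof.
rewrite -(bigA_distr_bigA (fun k b => (-1) ^+ label_anticomm (P k) b)) /=.
under eq_bigr do rewrite sum_sign_label_anticomm.
rewrite prodrMn_const card_ord -prod_eq_ffun.
by congr (_ *+ _); apply: eq_bigr => k _; rewrite ffunE.
Qed.

Lemma sum_pauli_mx_conj (i j i' j' : 'I_(2 ^ n)) :
  \sum_(P : PS) pm P i j * (pm P i' j')^*%C = ((i == i') && (j == j'))%:R *+ 2 ^ n.
Proof.
under eq_bigr do rewrite pauli_mx_conj !mxE -big_split /=.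
rewrite -(bigA_distr_bigA (fun k a =>
  sigma R a (qbit i k) (qbit j k) * sigma R a (qbit j' k) (qbit i' k))) /=.
under eq_bigr do rewrite sigma_completeness.
rewrite prodrMn_const card_ord -mulnb natrM -prod_qbit_eq -prod_qbit_eq -big_split.
by congr (_ *+ _); apply: eq_bigr => k _; rewrite -mulnb natrM.
Qed.

End PauliStrings.

Section ConjugateTranspose.
Variable C : numClosedFieldType.
Local Open Scope sesquilinear_scope.

Lemma trmxC_mul m n p (A : 'M[C]_(m, n)) (B : 'M[C]_(n, p)) :
  (A *m B) ^t* = B ^t* *m A ^t*.
Proof. by rewrite -!map_trmx map_mxM trmx_mul. Qed.

Lemma trmxC_scale m n (a : C) (A : 'M[C]_(m, n)) : (a *: A) ^t* = a^* *: A ^t*.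
Proof. by rewrite -!map_trmx map_mxZ linearZ. Qed.

End ConjugateTranspose.

Section Stabilizer.
Variables (R : realType) (n : nat) (psi : 'cV[R[i]]_(2 ^ n)).
Hypothesis psi_pure : is_pure_state psi.
Local Open Scope sesquilinear_scope.
Local Notation C := R[i].
Local Notation PS := (pauli_string n).
Local Notation pm := (@pauli_mx R n).

Lemma pauli_mx_adj (P : PS) : pm P ^t* = pm P.
Proof. by apply/matrixP => i j; rewrite [LHS]mxE [X in X^*]mxE; apply: pauli_mx_conj. Qed.

Lemma pure_state_norm : psi ^t* *m psi = 1.
Proof.
apply/matrixP => i j; rewrite !ord1 !mxE eqxx -psi_pure.
by apply: eq_bigr => k _; rewrite !mxE.
Qed.

Lemma expvalE (P : PS) : expval P psi = (psi ^t* *m pm P *m psi) 0 0.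
Proof.
rewrite /expval mxE exchange_big; apply: eq_bigr => j _; rewrite mxE mulr_suml.
by apply: eq_bigr => i _; rewrite !mxE.
Qed.

Lemma StP (P : PS) : reflect (exists b : bool, pm P *m psi = (-1) ^+ b *: psi) (P \in St psi).
Proof.
rewrite inE; apply: (iffP orP) => [[]/eqP eq_P | [[] eq_P]].
- by exists false; rewrite scale1r.
- by exists true; rewrite scaleN1r.
- by right; rewrite eq_P scaleN1r.
- by left; rewrite eq_P scale1r.
Qed.

Lemma expval_St_neq0 (P : PS) : P \in St psi -> expval P psi != 0.
Proof.
case/StP=> b eq_P; rewrite expvalE -mulmxA eq_P -scalemxAr pure_state_norm.
by rewrite !mxE eqxx mulr1 signr_eq0.
Qed.

Lemma St_sign_expval (S Q : PS) : S \in St psi -> expval Q psi != 0 -> pauli_sign R S Q = 1.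
Proof.
case/StP=> b eq_S; rewrite expvalE => nz_e.
have bra_S : psi ^t* *m pm S = (-1) ^+ b *: psi ^t*.
  by rewrite -[pm S]pauli_mx_adj -trmxC_mul eq_S trmxC_scale rmorph_sign.
have eq_psi : psi = (-1) ^+ b *: (pm S *m psi) by rewrite eq_S signrZK.
have eq_e : psi ^t* *m pm Q *m psi = pauli_sign R Q S *: (psi ^t* *m pm Q *m psi).
  rewrite {2}eq_psi -!scalemxAr mulmxA -(mulmxA _ (pm Q)) pauli_mx_comm.
  by rewrite -scalemxAr -scalemxAl !mulmxA bra_S -!scalemxAl scalerA mulrC -scalerA signrZK.
have /matrixP/(_ 0 0) := eq_e; rewrite [RHS]mxE => eq_e00.
by rewrite pauli_signC; apply: (mulIf nz_e); rewrite mul1r -eq_e00.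
Qed.

Lemma pauli_id_St : pauli_id n \in St psi.
Proof. by apply/StP; exists false; rewrite pauli_mx_id mul1mx scale1r. Qed.

Lemma St_mul (S T : PS) : S \in St psi -> T \in St psi -> pauli_mul S T \in St psi.
Proof.
move=> St_S St_T; have comm_ST := St_sign_expval St_S (expval_St_neq0 St_T).
move: St_S St_T => /StP[b eq_S] /StP[c eq_T].
have [d eq_phase] : exists d : bool, pauli_phase R S T = (-1) ^+ d.
  move: (pauli_phase_sqr R S T); rewrite comm_ST => /eqP; rewrite sqrf_eq1.
  by case/orP=> /eqP->; [exists false | exists true].
have eq_ST : pm (pauli_mul S T) = (-1) ^+ d *: (pm S *m pm T).
  by rewrite pauli_mx_mul eq_phase signrZK.
apply/StP; exists (d (+) c (+) b).
by rewrite eq_ST -scalemxAl -mulmxA eq_T -scalemxAr eq_S !scalerA -!signr_addb.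
Qed.

Definition St_commutant : {set PS} := [set Q | [forall S in St psi, pauli_sign R S Q == 1]].

Lemma sum_St_sign (Q : PS) :
  \sum_(S in St psi) pauli_sign R S Q = if Q \in St_commutant then #|St psi|%:R else 0.
Proof.
rewrite inE; case: ifPn => [/forall_inP comm_Q | /forall_inPn[S0 St_S0 sign_S0]].
  by rewrite (eq_bigr (fun _ => 1)) ?sumr_const // => S /comm_Q/eqP.
have {}sign_S0 : pauli_sign R S0 Q = -1.
  by move: (pauli_sign_sqr R S0 Q) => /eqP; rewrite sqrf_eq1 (negbTE sign_S0) => /eqP.
have St_mulS0 S : (pauli_mul S0 S \in St psi) = (S \in St psi).
  apply/idP/idP; last exact: St_mul.
  by rewrite -{2}(pauli_mulK S0 S); apply: St_mul.
(* S |-> S0 S permutes St psi and flips every sign, so the sum is its own opposite *)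
set x := \sum_(S in St psi) _; suff : x *+ 2 == 0 by rewrite mulrn_eq0 => /eqP.
rewrite mulr2n addr_eq0; apply/eqP; rewrite {1}/x.
rewrite (reindex_inj (can_inj (pauli_mulK S0))) /= -sumrN.
by apply: eq_big => [S | S _]; rewrite ?St_mulS0 // pauli_sign_mull sign_S0 mulN1r.
Qed.

Lemma card_St_commutant : (#|St psi| * #|St_commutant|)%N = (4 ^ n)%N.
Proof.
apply/eqP; rewrite -(eqr_nat C).
have count_Q : \sum_(Q : PS) \sum_(S in St psi) pauli_sign R S Q =
    (#|St psi| * #|St_commutant|)%:R.
  under eq_bigr do rewrite sum_St_sign.
  by rewrite -big_mkcond sumr_const natrM mulr_natr.
have count_S : \sum_(Q : PS) \sum_(S in St psi) pauli_sign R S Q = (4 ^ n)%:R.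
  rewrite exchange_big (bigD1 (pauli_id n)) ?pauli_id_St //= sum_pauli_sign eqxx.
  rewrite big1 ?addr0 // => S /andP[_ neq_S].
  by rewrite sum_pauli_sign (negbTE neq_S) mul0rn.
by rewrite -count_Q count_S.
Qed.

Lemma expval_support_sub : [set P : PS | expval P psi != 0] \subset St_commutant.
Proof.
apply/subsetP => Q; rewrite !inE => nz_Q.
by apply/forall_inP => S St_S; rewrite (St_sign_expval St_S nz_Q).
Qed.

Lemma card_St_pcard_le : (#|St psi| * pcard psi <= 4 ^ n)%N.
Proof. by rewrite -card_St_commutant leq_mul2l subset_leq_card ?orbT // expval_support_sub. Qed.

Lemma expval_conj (P : PS) : (expval P psi)^*%C = expval P psi.
Proof.
rewrite expvalE.
have -> : ((psi ^t* *m pm P *m psi) 0 0)^*%C = ((psi ^t* *m pm P *m psi) ^t*) 0 0.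
  by rewrite !mxE.
by rewrite !trmxC_mul trmxCK pauli_mx_adj mulmxA.
Qed.

Lemma sum_expval_normsq : \sum_(P : PS) expval P psi * (expval P psi)^*%C = (2 ^ n)%:R.
Proof.
pose a (x : 'I_(2 ^ n) * 'I_(2 ^ n)) := (psi x.1 0)^*%C * psi x.2 0.
have expand P : expval P psi * (expval P psi)^*%C =
    \sum_x \sum_y a x * (a y)^*%C * (pm P x.1 x.2 * (pm P y.1 y.2)^*%C).
  have -> : expval P psi = \sum_x a x * pm P x.1 x.2.
    by rewrite /expval pair_bigA; apply: eq_bigr => -[i j] _; rewrite /a /= mulrAC.
  rewrite rmorph_sum mulr_suml; apply: eq_bigr => x _.
  by rewrite mulr_sumr; apply: eq_bigr => y _; rewrite rmorphM /=; ring.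
have collapse x :
    \sum_y \sum_(P : PS) a x * (a y)^*%C * (pm P x.1 x.2 * (pm P y.1 y.2)^*%C) =
    a x * (a x)^*%C *+ 2 ^ n.
  rewrite (bigD1 x) //= -mulr_sumr sum_pauli_mx_conj !eqxx mulr1n mulr_natr.
  rewrite big1 ?addr0 // => y neq_yx.
  rewrite -mulr_sumr sum_pauli_mx_conj -[(_ && _)]/(x == y) eq_sym.
  by rewrite (negbTE neq_yx) mulr0n mul0rn mulr0.
have norm1 : \sum_x a x * (a x)^*%C = 1.
  have -> : 1 = 1 * 1 :> C by rewrite mulr1.
  rewrite -{1}psi_pure -psi_pure big_distrlr /= pair_bigA.
  by apply: eq_bigr => x _; rewrite /a rmorphM /= conjcK; ring.
under eq_bigr do rewrite expand.
rewrite exchange_big; under eq_bigr do rewrite exchange_big collapse.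
by rewrite sumrMnl norm1.
Qed.

End Stabilizer.

Section PowerTangents.
Variable R : realType.

Lemma powR_le_tangent (b z : R) : 0 <= b <= 1 -> 0 <= z -> z `^ b <= 1 + b * (z - 1).
Proof.
move=> /andP[b_ge0 b_le1] z_ge0.
have [->|b_neq0] := eqVneq b 0; first by rewrite powRr0 mul0r addr0.
have [->|b_neq1] := eqVneq b 1; first by rewrite powRr1 // mul1r addrC subrK.
have b_gt0 : 0 < b by rewrite lt_def b_neq0.
have b_lt1 : b < 1 by rewrite lt_def eq_sym b_neq1.
(* Young's inequality with exponents 1/b and 1/(1-b), applied to z^b and 1 *)
have := @conjugate_powR R (z `^ b) 1 b^-1 (1 - b)^-1 (powR_ge0 _ _) ler01.
rewrite !invr_gt0 b_gt0 subr_gt0 b_lt1 !invrK addrC subrK => /(_ isT isT erefl).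
rewrite mulr1 -powRrM mulfV // powRr1 // powR1 => le_zb.
by apply: (le_trans le_zb); lra.
Qed.

Lemma powR_ge_tangent (a z : R) : 1 <= a -> 0 <= z -> 1 + a * (z - 1) <= z `^ a.
Proof.
move=> a_ge1 z_ge0; have a_gt0 : 0 < a by apply: lt_le_trans a_ge1.
have := @powR_le_tangent a^-1 (z `^ a).
rewrite invr_ge0 ltW //= invf_le1 // => /(_ a_ge1 (powR_ge0 _ _)).
rewrite -powRrM mulfV ?gt_eqF // powRr1 // => le_z.
have : a * z <= a * (1 + a^-1 * (z `^ a - 1)) by rewrite ler_pM2l.
by rewrite mulrDr mulrA mulfV ?gt_eqF // mul1r mulr1; lra.
Qed.

Lemma ln_le_subr1 (y : R) : 0 < y -> ln y <= y - 1.
Proof. by move=> y_gt0; have := @le_ln1Dx R (y - 1); rewrite subrKC; apply; lra. Qed.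

End PowerTangents.

Section FiniteDistribution.
Variables (R : realType) (I : finType) (p : I -> R).
Hypotheses (p_ge0 : forall x, 0 <= p x) (p_sum1 : \sum_x p x = 1).
Local Notation N := #|[set x | p x != 0]|.

Lemma sum_support_eq1 : \sum_(x | p x != 0) p x = 1.
Proof.
rewrite -p_sum1 [RHS](bigID (fun x => p x != 0)) /= [X in _ = _ + X]big1 ?addr0 // => x.
by rewrite negbK => /eqP.
Qed.

Lemma sum_support_const (c : R) : \sum_(x | p x != 0) c = c *+ N.
Proof. by rewrite sumr_const cardsE. Qed.

Lemma support_card_gt0 : (0 < N)%N.
Proof.
rewrite lt0n cards_eq0; apply/negP => /eqP/setP null; move: sum_support_eq1.
rewrite big1 => [/esym/eqP|x nz_x]; first by rewrite oner_eq0.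
by have := null x; rewrite !inE nz_x.
Qed.

Let N_gt0 : 0 < N%:R :> R. Proof. by rewrite ltr0n support_card_gt0. Qed.

Lemma sum_support_powR_gt0 (a : R) : 0 < \sum_(x | p x != 0) p x `^ a.
Proof.
have [x nz_x] : exists x, p x != 0.
  by have /card_gt0P[x] := support_card_gt0; rewrite inE; exists x.
rewrite (bigD1 x) //= ltr_pwDl ?sumr_ge0 // => [|y _]; last exact: powR_ge0.
by rewrite powR_gt0 // lt_def nz_x p_ge0.
Qed.

Lemma sum_support_tangent (a : R) :
  \sum_(x | p x != 0) (1 + a * (N%:R * p x - 1)) = N%:R.
Proof.
rewrite big_split /= -mulr_sumr sumrB -mulr_sumr sum_support_eq1 !sum_support_const.
by rewrite mulr1 subrr mulr0 addr0.
Qed.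

Lemma sum_support_scaled_powR (a : R) :
  \sum_(x | p x != 0) (N%:R * p x) `^ a = N%:R `^ a * \sum_(x | p x != 0) p x `^ a.
Proof. by rewrite mulr_sumr; apply: eq_bigr => x _; rewrite powRM ?ler0n. Qed.

Lemma ln_sum_support_powR_le (a : R) : 0 <= a <= 1 ->
  ln (\sum_(x | p x != 0) p x `^ a) <= (1 - a) * ln N%:R.
Proof.
move=> a01; have S_gt0 := sum_support_powR_gt0 a.
suff : ln (N%:R `^ a * \sum_(x | p x != 0) p x `^ a) <= ln N%:R.
  by rewrite lnM ?posrE ?powR_gt0 // ln_powR; lra.
rewrite ler_ln ?posrE ?mulr_gt0 ?powR_gt0 // -sum_support_scaled_powR.
rewrite -[X in _ <= X](sum_support_tangent a); apply: ler_sum => x _.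
by apply: powR_le_tangent; rewrite ?mulr_ge0 ?ler0n.
Qed.

Lemma ln_sum_support_powR_ge (a : R) : 1 <= a ->
  (1 - a) * ln N%:R <= ln (\sum_(x | p x != 0) p x `^ a).
Proof.
move=> a_ge1; have S_gt0 := sum_support_powR_gt0 a.
suff : ln N%:R <= ln (N%:R `^ a * \sum_(x | p x != 0) p x `^ a).
  by rewrite lnM ?posrE ?powR_gt0 // ln_powR; lra.
rewrite ler_ln ?posrE ?mulr_gt0 ?powR_gt0 // -sum_support_scaled_powR.
rewrite -[X in X <= _](sum_support_tangent a); apply: ler_sum => x _.
by apply: powR_ge_tangent; rewrite ?mulr_ge0 ?ler0n.
Qed.

Lemma renyi_le_ln_support (a : R) : 0 <= a -> a != 1 ->
  (1 - a)^-1 * ln (\sum_(x | p x != 0) p x `^ a) <= ln N%:R.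
Proof.
move=> a_ge0 a_neq1; have [a_lt1|a_gt1] := ltrP a 1.
  rewrite ler_pdivrMl ?subr_gt0 //.
  by apply: ln_sum_support_powR_le; rewrite a_ge0 ltW.
rewrite ler_ndivrMl ?subr_lt0 ?lt_neqAle 1?eq_sym ?a_neq1 //.
exact: ln_sum_support_powR_ge.
Qed.

Lemma shannon_le_ln_support : - \sum_(x | p x != 0) p x * ln (p x) <= ln N%:R.
Proof.
(* ln y <= y - 1 at y = 1 / (N p x), weighted by p x *)
have gibbs x : p x != 0 -> - (p x * ln (p x)) <= p x * ln N%:R + (N%:R^-1 - p x).
  move=> nz_x; have px_gt0 : 0 < p x by rewrite lt_def nz_x p_ge0.
  have := @ln_le_subr1 _ (N%:R * p x)^-1; rewrite invr_gt0 mulr_gt0 // => /(_ isT).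
  rewrite lnV ?posrE ?mulr_gt0 // lnM ?posrE // -(ler_pM2l px_gt0).
  rewrite mulrBr mulr1 invfM mulrCA mulfV ?gt_eqF // mulr1; lra.
rewrite -sumrN; apply: (le_trans (ler_sum _ gibbs)).
rewrite big_split sumrB /= -mulr_suml sum_support_eq1 !sum_support_const.
by rewrite -[_^-1 *+ _]mulr_natr mulVf ?gt_eqF // mul1r subrr addr0.
Qed.

End FiniteDistribution.

Section Log2.
Variable R : realType.

Lemma ln2_gt0 : 0 < ln (2 : R).
Proof. by rewrite ln_gt0 // ltr1n. Qed.

Lemma log2M (x y : R) : 0 < x -> 0 < y -> log2 (x * y) = log2 x + log2 y.
Proof. by move=> x_gt0 y_gt0; rewrite /log2 lnM ?posrE // mulrDl. Qed.

Lemma ler_log2 (x y : R) : 0 < x -> 0 < y -> (log2 x <= log2 y) = (x <= y).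
Proof. by move=> x_gt0 y_gt0; rewrite /log2 ler_pM2r ?invr_gt0 ?ln2_gt0 // ler_ln. Qed.

Lemma log2_exp2 k : log2 (2 ^ k)%:R = k%:R :> R.
Proof.
rewrite /log2 natrX lnXn // -[ln _ *+ _]mulr_natr mulrAC mulfV ?mul1r //.
by rewrite gt_eqF ?ln2_gt0.
Qed.

End Log2.

Section StabilizerEntropy.
Variables (R : realType) (n : nat) (psi : 'cV[R[i]]_(2 ^ n)).
Hypothesis psi_pure : is_pure_state psi.
Local Notation PS := (pauli_string n).

Lemma dimR_gt0 : 0 < dimR R n.
Proof. by rewrite ltr0n expn_gt0. Qed.

Lemma expval_realE (P : PS) : expval P psi = (complex.Re (expval P psi))%:C%C.
Proof.
have := expval_conj psi P; case: (expval P psi) => a b /eqP.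
rewrite eq_complex /= => /andP[_ /eqP b_eq].
by apply/eqP; rewrite eq_complex /= eqxx /=; apply/eqP; lra.
Qed.

Lemma sum_Re_expval_sqr : \sum_(P : PS) complex.Re (expval P psi) ^+ 2 = (2 ^ n)%:R.
Proof.
apply: (@complexI R); rewrite rmorph_sum rmorph_nat -(sum_expval_normsq psi_pure).
by apply: eq_bigr => P _; rewrite expval_conj [in RHS]expval_realE -rmorphM -expr2.
Qed.

Lemma Xi_ge0 (P : PS) : 0 <= Xi P psi.
Proof. by rewrite mulr_ge0 ?sqr_ge0 // invr_ge0 ltW // dimR_gt0. Qed.

Lemma sum_Xi : \sum_(P : PS) Xi P psi = 1.
Proof. by rewrite -mulr_sumr sum_Re_expval_sqr mulVf // gt_eqF // dimR_gt0. Qed.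

Lemma pcard_Xi : pcard psi = #|[set P : PS | Xi P psi != 0]|.
Proof.
apply: eq_card => P; rewrite !inE /Xi mulf_eq0 invr_eq0 (gt_eqF dimR_gt0) /= sqrf_eq0.
by rewrite [in LHS]expval_realE (inj_eq (@complexI R)).
Qed.

Lemma pcard_gt0 : (0 < pcard psi)%N.
Proof. by rewrite pcard_Xi (support_card_gt0 sum_Xi). Qed.

Lemma card_St_le : #|St psi|%:R <= dimR R n ^+ 2 / (pcard psi)%:R.
Proof.
rewrite ler_pdivlMr ?ltr0n ?pcard_gt0 // -natrM /dimR -natrX ler_nat.
by rewrite -expnM [(n * 2)%N]mulnC expnM; apply: card_St_pcard_le.
Qed.

Lemma log2_pcard_le_nullity : log2 (pcard psi)%:R - n%:R <= nullity psi.
Proof.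
have St_gt0 : (0 < #|St psi|)%N by apply/card_gt0P; exists (pauli_id n); apply: pauli_id_St.
suff : log2 (#|St psi| * pcard psi)%:R <= log2 (2 ^ (2 * n))%:R :> R.
  by rewrite natrM log2M ?ltr0n ?pcard_gt0 // log2_exp2 natrM /nullity; lra.
rewrite ler_log2 ?ltr0n ?muln_gt0 ?pcard_gt0 ?expn_gt0 ?St_gt0 // ler_nat expnM.
exact: card_St_pcard_le.
Qed.

Lemma Malpha_le_log2_pcard (a : R) : 0 <= a -> Malpha a psi <= log2 (pcard psi)%:R - n%:R.
Proof.
move=> a_ge0; rewrite /Malpha /dimR log2_exp2 pcard_Xi /log2.
have ln2_inv_ge0 : 0 <= (ln (2 : R))^-1 by rewrite invr_ge0 ltW ?ln2_gt0.
case: eqP => [_|/eqP a_neq1]; rewrite lerD2r.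
  under eq_bigr do rewrite mulrA.
  rewrite -mulr_suml -mulNr ler_wpM2r //; exact: shannon_le_ln_support Xi_ge0 sum_Xi.
by rewrite mulrA ler_wpM2r //; exact: (renyi_le_ln_support Xi_ge0 sum_Xi a_ge0 a_neq1).
Qed.

End StabilizerEntropy.

Theorem mainTheorem2 (R : realType) (n : nat) (psi : 'cV[R[i]]_(2 ^ n)) :
  (1 <= n)%N ->
  is_pure_state psi ->
  [/\ (#|St psi|)%:R <= (dimR R n) ^+ 2 / (pcard psi)%:R,
      Malpha 0 psi <= nullity psi
    & forall alpha : R, 0 <= alpha -> Malpha alpha psi <= nullity psi].
Proof.
move=> _ psi_pure.
have Malpha_le_nullity a : 0 <= a -> Malpha a psi <= nullity psi.
  move=> a_ge0; apply: le_trans (Malpha_le_log2_pcard psi_pure a_ge0) _.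
  exact: log2_pcard_le_nullity.
by split; [exact: card_St_le | exact: Malpha_le_nullity | exact: Malpha_le_nullity].
Qed.
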